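(* Let $\Sigma$ be a signature (under the standing assumptions below) and let $(F,\sigma,\theta),(F',\sigma',\theta'):\mathcal F_\Sigma\to\mathcal C$ be two cwf morphisms into a cwf $\mathcal C$ such that: $F(\Gamma)=F'(\Gamma)$ whenever $(\Gamma,S)\in\Sigma$ or $(\Gamma,f,U)\in\Sigma$; $\sigma(\Gamma,S(\mathrm{OV}(\Gamma)))=\sigma'(\Gamma,S(\mathrm{OV}(\Gamma)))$ for all $(\Gamma,S)\in\Sigma$; and $\sigma(\Gamma,U)=\sigma'(\Gamma,U)$ and $\theta(\Gamma,U,f(\mathrm{OV}(\Gamma)))=\theta'(\Gamma,U,f(\mathrm{OV}(\Gamma)))$ for all $(\Gamma,f,U)\in\Sigma$. Then $(F,\sigma,\theta)=(F',\sigma',\theta')$.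
   Context: Standing assumptions: the variable set is $V=\{1,2,3,\ldots\}$ with $\mathsf{fr}(X)=\max(\{1\}\cup\{x+1:x\in X\})$ and $\varphi(X)=\{\mathsf{fr}(X)\}$ for finite $X\subseteq V$; all declarations of signatures are on standard form, written $(\Gamma,S)$ (type) and $(\Gamma,f,U)$ (function). Preelements are terms built from variables and function symbols; a pretype is $S(t_1,\ldots,t_n)$ with $S$ a type symbol and $t_i$ preelements; $\mathrm{V}(E)$ is the set of variables of $E$; $E[\bar a/\bar x]$ is simultaneous substitution. A precontext is $\Gamma=x_1:A_1,\ldots,x_n:A_n$ with $x_k=\mathsf{fr}(\{x_1,\ldots,x_{k-1}\})$ and $\mathrm{V}(A_k)\subseteq\{x_1,\ldots,x_{k-1}\}$; $\mathrm{OV}(\Gamma)=x_1,\ldots,x_n$; $\mathrm{fresh}(\Gamma)=\mathsf{fr}(\{x_1,\ldots,x_n\})$; $E[\bar a/\Gamma]=E[\bar a/x_1,\ldots,x_n]$. A presignature is a set of declarations $(\Gamma,S)$ ($S$ a type symbol) and $(\Gamma,f,U)$ ($f$ a function symbol, $U$ a pretype with $\mathrm{V}(U)\subseteq\mathrm{V}(\Gamma)$), each symbol declared at most once. $\mathcal{J}(\Sigma)$ is the smallest set of judgements (''$\Gamma$ context'', ''$A$ type $(\Gamma)$'', ''$a:A\ (\Gamma)$'') closed under: (R1) $\langle\rangle$ context; (R2) from $\Gamma$ context and $A$ type $(\Gamma)$ infer $\Gamma,\mathrm{fresh}(\Gamma):A$ context; (R3) from $x_1:A_1,\ldots,x_n:A_n$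 context infer $x_i:A_i\ (x_1:A_1,\ldots,x_n:A_n)$; (R4) if $(\Gamma,S)\in\Sigma$ and $\bar a:\Delta\to\Gamma$ infer $S(\bar a)$ type $(\Delta)$; (R5) if $(\Gamma,f,U)\in\Sigma$, $\bar a:\Delta\to\Gamma$ and $U[\bar a/\Gamma]$ type $(\Delta)$ infer $f(\bar a):U[\bar a/\Gamma]\ (\Delta)$; where, for $\Gamma=x_1:A_1,\ldots,x_n:A_n$, ''$\bar a:\Delta\to\Gamma$'' abbreviates the judgements $\Delta$ context, $\Gamma$ context, $a_k:A_k[a_1,\ldots,a_{k-1}/x_1,\ldots,x_{k-1}]\ (\Delta)$ ($k=1,\ldots,n$). $\Sigma$ is a signature if ($\Gamma$ context)$\in\mathcal{J}(\Sigma)$ for $(\Gamma,S)\in\Sigma$ and ($U$ type $(\Gamma)$)$\in\mathcal{J}(\Sigma)$ for $(\Gamma,f,U)\in\Sigma$. A category with families (cwf) consists of: a category $\mathcal C$ with a terminal object $\top$; for each object $\Gamma$ a class $\mathrm{Ty}(\Gamma)$, and for $f:\Delta\to\Gamma$ a function $A\mapsto A\{f\}:\mathrm{Ty}(\Gamma)\to\mathrm{Ty}(\Delta)$ with $A\{1\}=A$, $A\{f\circ g\}=A\{f\}\{g\}$; for $A\in\mathrm{Ty}(\Gamma)$ an object $\Gamma.A$ and a morphism $\mathrm{p}(A)=\mathrm{p}_\Gamma(A):\Gamma.A\to\Gamma$; for $A\in\mathrm{Ty}(\Gamma)$ a class $\mathrm{Tm}(\Gamma,A)$ and for $f:\Delta\to\Gamma$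 a function $a\mapsto a\{f\}:\mathrm{Tm}(\Gamma,A)\to\mathrm{Tm}(\Delta,A\{f\})$ with $a\{1\}=a$, $a\{f\circ g\}=a\{f\}\{g\}$; for each $A\in\mathrm{Ty}(\Gamma)$ an element $\mathrm{v}_A\in\mathrm{Tm}(\Gamma.A,A\{\mathrm{p}(A)\})$; for $f:\Delta\to\Gamma$ and $a\in\mathrm{Tm}(\Delta,A\{f\})$ a morphism $\langle f,a\rangle_A:\Delta\to\Gamma.A$ such that $\mathrm{p}(A)\circ\langle f,a\rangle_A=f$, $\mathrm{v}_A\{\langle f,a\rangle_A\}=a$, $\langle\mathrm{p}(A)\circ h,\mathrm{v}_A\{h\}\rangle_A=h$ for every $h:\Delta\to\Gamma.A$, and $\langle f,a\rangle_A\circ g=\langle f\circ g,a\{g\}\rangle_A$. A cwf morphism $(F,\sigma,\theta):\mathcal C\to\mathcal C'$ consists of a functor $F$ with $F(\top)=\top'$; functions $\sigma_\Gamma:\mathrm{Ty}(\Gamma)\to\mathrm{Ty}'(F\Gamma)$ with $\sigma_\Delta(A\{f\})=\sigma_\Gamma(A)\{Ff\}$ for $f:\Delta\to\Gamma$, such that $F(\Gamma.A)=F\Gamma.\sigma_\Gamma(A)$ and $F(\mathrm{p}_\Gamma(A))=\mathrm{p}_{F\Gamma}(\sigma_\Gamma(A))$; and functions $\theta_{\Gamma,A}:\mathrm{Tm}(\Gamma,A)\to\mathrm{Tm}'(F\Gamma,\sigma_\Gamma(A))$ with $\theta_{\Delta,A\{f\}}(a\{f\})=\theta_{\Gamma,A}(a)\{Ff\}$,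 $\theta_{\Gamma.A,A\{\mathrm{p}(A)\}}(\mathrm{v}_A)=\mathrm{v}_{\sigma_\Gamma(A)}$, and $F(\langle f,a\rangle_A)=\langle Ff,\theta_{\Delta,A\{f\}}(a)\rangle_{\sigma_\Gamma(A)}$ for $f:\Delta\to\Gamma$, $a\in\mathrm{Tm}(\Delta,A\{f\})$. The cwf $\mathcal F_\Sigma$: objects are precontexts $\Gamma$ with ($\Gamma$ context)$\in\mathcal{J}(\Sigma)$; morphisms $\Delta\to\Gamma$ are triples $(\Delta,\Gamma,\bar a)$ with $\bar a:\Delta\to\Gamma$ a context map in $\mathcal{J}(\Sigma)$; composition $(\Gamma,\Theta,\bar t)\circ(\Delta,\Gamma,\bar s)=(\Delta,\Theta,(t_1[\bar s/\Gamma],\ldots,t_k[\bar s/\Gamma]))$; identity $(\Gamma,\Gamma,\mathrm{OV}(\Gamma))$; terminal object $\langle\rangle$. $\mathrm{Ty}(\Gamma)=\{(\Gamma,A): (A\text{ type }(\Gamma))\in\mathcal{J}(\Sigma)\}$ with $(\Gamma,A)\{(\Delta,\Gamma,\bar a)\}=(\Delta,A[\bar a/\Gamma])$; $\mathrm{Tm}(\Gamma,(\Gamma,A))=\{((\Gamma,A),a): (a:A\ (\Gamma))\in\mathcal{J}(\Sigma)\}$ with $((\Gamma,A),a)\{(\Delta,\Gamma,\bar a)\}=((\Delta,A[\bar a/\Gamma]),a[\bar a/\Gamma])$; for $\mathrm S=(\Gamma,S)$: $\Gamma.\mathrm S=\langle\Gamma,\mathrm{fresh}(\Gamma):S\rangle$,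 $\mathrm{p}_\Gamma(\mathrm S)=(\Gamma.\mathrm S,\Gamma,\mathrm{OV}(\Gamma))$, $\mathrm{v}_{\mathrm S}=((\Gamma.\mathrm S,S),\mathrm{fresh}(\Gamma))$, $\langle(\Delta,\Gamma,\bar s),((\Delta,S[\bar s/\Gamma]),b)\rangle_{\mathrm S}=(\Delta,\Gamma.\mathrm S,(\bar s,b))$. For a cwf morphism $(F,\sigma,\theta)$ out of $\mathcal F_\Sigma$ write $\sigma(\Gamma,A)$ for $\sigma_\Gamma((\Gamma,A))$ and $\theta(\Gamma,A,a)$ for $\theta_{\Gamma,(\Gamma,A)}(((\Gamma,A),a))$. *)

From HB Require Import structures.
From mathcomp Require Import all_boot.
Set Implicit Arguments. Unset Strict Implicit. Unset Printing Implicit Defensive.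

(* Variables are natural numbers (only the positive ones are ever produced
   by [fr], hence only they occur in derivable judgements); type symbols and
   function symbols are natural numbers (two separate sorts).             *)
Inductive tm : Type := Var of nat | App of nat & seq tm.
Record pty : Type := PTy { tsym : nat ; targs : seq tm }.
Definition ctx := seq (nat * pty).

Fixpoint vars_tm (t : tm) : seq nat :=
  match t with Var x => [:: x] | App _ ts => flatten (map vars_tm ts) end.
Definition vars_ty (A : pty) : seq nat := flatten (map vars_tm (targs A)).

Definition fr (X : seq nat) : nat := foldr (fun x m => maxn x.+1 m) 1 X.
Definition OV (G : ctx) : seq nat := map fst G.
Definition fresh (G : ctx) : nat := fr (OV G).

Fixpoint assoc (s : seq (nat * tm)) (x : nat) : option tm :=
  match s with
  | [::] => None
  | (y, a) :: s' => if x == y then Some a else assoc s' x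
  end.
Fixpoint subst_tm (s : seq (nat * tm)) (t : tm) : tm :=
  match t with
  | Var x => if assoc s x is Some a then a else Var x
  | App f ts => App f (map (subst_tm s) ts)
  end.
Definition subst_ty (s : seq (nat * tm)) (A : pty) : pty :=
  PTy (tsym A) (map (subst_tm s) (targs A)).
Definition sb (ts : seq tm) (G : ctx) : seq (nat * tm) := zip (OV G) ts.

Definition dflt_decl : nat * pty := (0, PTy 0 [::]).

Fixpoint precontext_aux (prev : seq nat) (G : ctx) : Prop :=
  match G with
  | [::] => True
  | (x, A) :: G' =>
      [/\ x = fr prev, {subset vars_ty A <= prev} & precontext_aux (rcons prev x) G']
  end.
Definition precontext (G : ctx) : Prop := precontext_aux [::] G.

Inductive decl : Type :=
  | DTy of ctx & nat
  | DFn of ctx & nat & pty.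

Definition presignature (Sg : decl -> Prop) : Prop :=
  [/\ (forall G S, Sg (DTy G S) -> precontext G),
      (forall G f U, Sg (DFn G f U) -> precontext G /\ {subset vars_ty U <= OV G}),
      (forall G G' S, Sg (DTy G S) -> Sg (DTy G' S) -> G = G') &
      (forall G G' f U U', Sg (DFn G f U) -> Sg (DFn G' f U') -> G = G' /\ U = U')].

Inductive judg : Type :=
  | JCtx of ctx
  | JTy of pty & ctx
  | JTm of tm & pty & ctx.

Definition cmapP (P : judg -> Prop) (ts : seq tm) (D G : ctx) : Prop :=
  [/\ P (JCtx D), P (JCtx G), size ts = size G &
      forall k, k < size G ->
        P (JTm (nth (Var 0) ts k)
               (subst_ty (zip (take k (OV G)) (take k ts)) (nth dflt_decl G k).2) D)].

Definition closed (Sg : decl -> Prop) (P : judg -> Prop) : Prop :=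
  [/\ P (JCtx [::]),
      (forall G A, P (JCtx G) -> P (JTy A G) -> P (JCtx (rcons G (fresh G, A)))),
      (forall G i, P (JCtx G) -> i < size G ->
          P (JTm (Var (nth dflt_decl G i).1) (nth dflt_decl G i).2 G)),
      (forall G S ts D, Sg (DTy G S) -> cmapP P ts D G -> P (JTy (PTy S ts) D)) &
      (forall G f U ts D, Sg (DFn G f U) -> cmapP P ts D G ->
          P (JTy (subst_ty (sb ts G) U) D) ->
          P (JTm (App f ts) (subst_ty (sb ts G) U) D))].

Definition J (Sg : decl -> Prop) (j : judg) : Prop :=
  forall P : judg -> Prop, closed Sg P -> P j.

Definition cmap Sg := cmapP (J Sg).

Definition signature (Sg : decl -> Prop) : Prop :=
  [/\ presignature Sg,
      (forall G S, Sg (DTy G S) -> J Sg (JCtx G)) &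
      (forall G f U, Sg (DFn G f U) -> J Sg (JTy U G))].

Unset Implicit Arguments.
Record cwf : Type := Cwf {
  ob : Type;
  hom : ob -> ob -> Type;
  comp : forall X Y Z : ob, hom Y Z -> hom X Y -> hom X Z;
  idm : forall X : ob, hom X X;
  comp_assoc : forall W X Y Z (h : hom Y Z) (g : hom X Y) (f : hom W X),
      comp _ _ _ (comp _ _ _ h g) f = comp _ _ _ h (comp _ _ _ g f);
  comp_id_l : forall X Y (f : hom X Y), comp _ _ _ (idm Y) f = f;
  comp_id_r : forall X Y (f : hom X Y), comp _ _ _ f (idm X) = f;
  top : ob;
  bang : forall X, hom X top;
  bang_uniq : forall X (f : hom X top), f = bang X;
  Tyc : ob -> Type;
  tsub : forall X Y : ob, Tyc Y -> hom X Y -> Tyc X;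
  tsub_id : forall X (A : Tyc X), tsub _ _ A (idm X) = A;
  tsub_comp : forall X Y Z (A : Tyc Z) (f : hom Y Z) (g : hom X Y),
      tsub _ _ A (comp _ _ _ f g) = tsub _ _ (tsub _ _ A f) g;
  ext : forall X : ob, Tyc X -> ob;
  pr : forall X (A : Tyc X), hom (ext X A) X;
  Tmc : forall X : ob, Tyc X -> Type;
  msub : forall X Y (A : Tyc Y), Tmc Y A -> forall f : hom X Y, Tmc X (tsub _ _ A f);
  msub_id : forall X (A : Tyc X) (a : Tmc X A),
      existT (Tmc X) _ (msub _ _ _ a (idm X)) = existT (Tmc X) A a;
  msub_comp : forall X Y Z (A : Tyc Z) (a : Tmc Z A) (f : hom Y Z) (g : hom X Y),
      existT (Tmc X) _ (msub _ _ _ a (comp _ _ _ f g))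
      = existT (Tmc X) _ (msub _ _ _ (msub _ _ _ a f) g);
  vr : forall X (A : Tyc X), Tmc (ext X A) (tsub _ _ A (pr X A));
  pair : forall X Y (A : Tyc Y) (f : hom X Y), Tmc X (tsub _ _ A f) -> hom X (ext Y A);
  pr_pair : forall X Y (A : Tyc Y) (f : hom X Y) (a : Tmc X (tsub _ _ A f)),
      comp _ _ _ (pr Y A) (pair _ _ A f a) = f;
  vr_pair : forall X Y (A : Tyc Y) (f : hom X Y) (a : Tmc X (tsub _ _ A f)),
      existT (Tmc X) _ (msub _ _ _ (vr Y A) (pair _ _ A f a)) = existT (Tmc X) _ a;
  (* <p(A) o h, v_A{h}>_A = h  (v_A{h} seen in Tm(Delta, A{p(A) o h})) *)
  pair_eta : forall X Y (A : Tyc Y) (h : hom X (ext Y A))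
      (b : Tmc X (tsub _ _ A (comp _ _ _ (pr Y A) h))),
      existT (Tmc X) _ b = existT (Tmc X) _ (msub _ _ _ (vr Y A) h) ->
      pair _ _ A (comp _ _ _ (pr Y A) h) b = h;
  (* <f,a>_A o g = <f o g, a{g}>_A  (a{g} seen in Tm(Delta', A{f o g})) *)
  pair_comp : forall W X Y (A : Tyc Y) (f : hom X Y) (a : Tmc X (tsub _ _ A f))
      (g : hom W X) (b : Tmc W (tsub _ _ A (comp _ _ _ f g))),
      existT (Tmc W) _ b = existT (Tmc W) _ (msub _ _ _ a g) ->
      comp _ _ _ (pair _ _ A f a) g = pair _ _ A (comp _ _ _ f g) b
}.
Set Implicit Arguments.

Definition FOb (Sg : decl -> Prop) : Type := {G : ctx | J Sg (JCtx G)}.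
Definition FHom (Sg : decl -> Prop) (D G : FOb Sg) : Type :=
  {ts : seq tm | cmap Sg ts (proj1_sig D) (proj1_sig G)}.
Definition FTy (Sg : decl -> Prop) (G : FOb Sg) : Type :=
  {A : pty | J Sg (JTy A (proj1_sig G))}.
Definition FTm (Sg : decl -> Prop) (G : FOb Sg) (A : FTy G) : Type :=
  {a : tm | J Sg (JTm a (proj1_sig A) (proj1_sig G))}.

Lemma J_empty Sg : J Sg (JCtx [::]).
Proof. by move=> P []. Qed.

Lemma J_ext Sg G A : J Sg (JCtx G) -> J Sg (JTy A G) ->
  J Sg (JCtx (rcons G (fresh G, A))).
Proof. move=> hG hA P HP; case: (HP) => _ H2 _ _ _; exact: H2 (hG P HP) (hA P HP). Qed.

Definition Ftop (Sg : decl -> Prop) : FOb Sg := exist _ [::] (@J_empty Sg).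

Definition FExt (Sg : decl -> Prop) (G : FOb Sg) (A : FTy G) : FOb Sg :=
  exist _ (rcons (proj1_sig G) (fresh (proj1_sig G), proj1_sig A))
        (J_ext (proj2_sig G) (proj2_sig A)).

Definition OVt (G : ctx) : seq tm := map Var (OV G).

(*  The operations of F_Sigma that need the substitution lemma to be total  *)
(*  (identity, composition, A{f}, a{f}, p, v, <f,a>) are expressed          *)
(*  relationally: for every element of F_Sigma whose underlying raw data     *)
(*  is the one prescribed by the definition of F_Sigma.                      *)

Record Fmor (Sg : decl -> Prop) (C : cwf) : Type := FMor {
  Fo : FOb Sg -> ob C;
  Fh : forall D G : FOb Sg, FHom D G -> hom C (Fo D) (Fo G);
  sg : forall G : FOb Sg, FTy G -> Tyc C (Fo G);
  th : forall (G : FOb Sg) (A : FTy G), FTm A -> Tmc C (Fo G) (sg A);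
  Fh_id : forall (G : FOb Sg) (i : FHom G G),
      proj1_sig i = OVt (proj1_sig G) -> Fh i = idm C (Fo G);
  Fh_comp : forall (D G T : FOb Sg) (s : FHom D G) (t : FHom G T) (u : FHom D T),
      proj1_sig u = map (subst_tm (sb (proj1_sig s) (proj1_sig G))) (proj1_sig t) ->
      Fh u = comp C _ _ _ (Fh t) (Fh s);
  Fo_top : Fo (Ftop Sg) = top C;
  sg_sub : forall (D G : FOb Sg) (f : FHom D G) (A : FTy G) (B : FTy D),
      proj1_sig B = subst_ty (sb (proj1_sig f) (proj1_sig G)) (proj1_sig A) ->
      sg B = tsub C _ _ (sg A) (Fh f);
  Fo_ext : forall (G : FOb Sg) (A : FTy G), Fo (FExt A) = ext C _ (sg A);
  Fh_pr : forall (G : FOb Sg) (A : FTy G) (p : FHom (FExt A) G),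
      proj1_sig p = OVt (proj1_sig G) ->
      existT (fun X => hom C X (Fo G)) (Fo (FExt A)) (Fh p)
      = existT (fun X => hom C X (Fo G)) (ext C _ (sg A)) (pr C _ (sg A));
  th_sub : forall (D G : FOb Sg) (f : FHom D G) (A : FTy G) (a : FTm A)
      (B : FTy D) (b : FTm B),
      proj1_sig B = subst_ty (sb (proj1_sig f) (proj1_sig G)) (proj1_sig A) ->
      proj1_sig b = subst_tm (sb (proj1_sig f) (proj1_sig G)) (proj1_sig a) ->
      existT (Tmc C (Fo D)) (sg B) (th b)
      = existT (Tmc C (Fo D)) _ (msub C _ _ _ (th a) (Fh f));
  (* theta(v_A) = v_sigma(A);  v_A = ((G.A, A{p(A)}), fresh(G)) *)
  th_vr : forall (G : FOb Sg) (A : FTy G) (B : FTy (FExt A)) (b : FTm B),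
      proj1_sig B = subst_ty (sb (OVt (proj1_sig G)) (proj1_sig G)) (proj1_sig A) ->
      proj1_sig b = Var (fresh (proj1_sig G)) ->
      existT (fun X => {T : Tyc C X & Tmc C X T}) (Fo (FExt A)) (existT _ (sg B) (th b))
      = existT (fun X => {T : Tyc C X & Tmc C X T}) (ext C _ (sg A))
               (existT _ _ (vr C _ (sg A)));
  (* F(<f,a>) = <Ff, theta(a)>  (theta(a) seen in Tm(FD, sigma(A){Ff})) *)
  Fh_pair : forall (D G : FOb Sg) (A : FTy G) (f : FHom D G) (B : FTy D) (a : FTm B)
      (h : FHom D (FExt A)) (c : Tmc C (Fo D) (tsub C _ _ (sg A) (Fh f))),
      proj1_sig B = subst_ty (sb (proj1_sig f) (proj1_sig G)) (proj1_sig A) ->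
      proj1_sig h = rcons (proj1_sig f) (proj1_sig a) ->
      existT (Tmc C (Fo D)) _ c = existT (Tmc C (Fo D)) _ (th a) ->
      existT (fun X => hom C (Fo D) X) (Fo (FExt A)) (Fh h)
      = existT (fun X => hom C (Fo D) X) (ext C _ (sg A)) (pair C _ _ (sg A) (Fh f) c)
}.

From Pilot Require Import Defs.
From mathcomp Require Import all_boot.
From Stdlib Require Import ProofIrrelevance FunctionalExtensionality Eqdep.

Set Implicit Arguments. Unset Strict Implicit. Unset Printing Implicit Defensive.

(* Every object, morphism, type and term of F_Sigma is generated by the rules
   R1-R5, so it suffices to check, by induction on derivations, that the two
   morphisms agree on whatever each rule produces.  A context is built from <>
   by comprehensions, so F and F' agree on it once sigma and sigma' agree on its
   types; the i-th variable of Gamma.A is either v_A or a variable of Gamma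
   substituted along p(A); a context map (a_1, ..., a_n) is the iterated pairing
   <...<<>, a_1>, ..., a_n>; finally S(a) = S(OV Gamma)[a] and
   f(a) = f(OV Gamma)[a], where the hypotheses give agreement on the generic
   instances S(OV Gamma) and f(OV Gamma), and substitution along an agreeing
   context map preserves agreement. *)

Lemma subst_tm_id s : (forall x, subst_tm s (Var x) = Var x) -> forall t, subst_tm s t = t.
Proof.
move=> hs; fix IH 1; case=> [x | f ts]; first exact: hs.
rewrite /=; congr (App f _); elim: ts => //= t ts IHts; by rewrite IH IHts.
Qed.

Lemma subst_var_id l x : subst_tm (zip l (map Var l)) (Var x) = Var x.
Proof. by elim: l => [|y l IH] //=; case: eqP => [->|_]. Qed.

Lemma subst_ty_id l A : subst_ty (zip l (map Var l)) A = A.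
Proof.
case: A => S ts; rewrite /subst_ty /=; congr PTy.
by rewrite (eq_map (subst_tm_id (@subst_var_id l))) map_id.
Qed.

Lemma fr_gt x X : x \in X -> x < fr X.
Proof.
elim: X => [|y X IH] //=; rewrite in_cons leq_max => /orP [/eqP ->|/IH ->].
  by rewrite ltnSn.
by rewrite orbT.
Qed.

Lemma assoc_zip_nth l ts k :
  size l = size ts -> k < size l -> nth 0 l k \notin take k l ->
  assoc (zip l ts) (nth 0 l k) = Some (nth (Var 0) ts k).
Proof.
elim: l ts k => [|y l IH] [|t ts] [|k] //= [hs] hk; first by rewrite eqxx.
by rewrite in_cons negb_or => /andP [ne nin]; rewrite (negbTE ne) IH.
Qed.

Definition fresh_ctx (G : ctx) :=
  forall k, k < size G -> (nth dflt_decl G k).1 = fresh (take k G).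

Lemma subst_OVt G ts : fresh_ctx G -> size ts = size G ->
  map (subst_tm (sb ts G)) (OVt G) = ts.
Proof.
move=> hG hs; apply: (@eq_from_nth _ (Var 0)); first by rewrite !size_map.
move=> k; rewrite !size_map => hk.
rewrite /OVt -map_comp (nth_map 0) ?size_map //= /sb (assoc_zip_nth (k := k)) ?size_map //.
rewrite /OV (nth_map dflt_decl) // hG // /fresh /OV -map_take.
by apply/negP => /fr_gt; rewrite ltnn.
Qed.

Lemma take_rcons_le T (s : seq T) x k : k <= size s -> take k (rcons s x) = take k s.
Proof. by move=> hk; rewrite -cats1 takel_cat. Qed.

Ltac invert_existT H :=
  let e := fresh "e" in
  have e := f_equal (@projT1 _ _) H; simpl in e; subst; apply inj_pair2 in H.

Section CwfCongruence.
Variable C : cwf.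

Definition hom_pack X Y (f : hom C X Y) : {X : ob C & {Y : ob C & hom C X Y}} :=
  existT _ X (existT _ Y f).
Definition tm_pack X (T : Tyc C X) (a : Tmc C X T) : {X : ob C & {T : Tyc C X & Tmc C X T}} :=
  existT _ X (existT _ T a).

Lemma hom_pack_cod X Y Y' (g : hom C X Y) (g' : hom C X Y') :
  existT (fun Z => hom C X Z) Y g = existT _ Y' g' -> hom_pack g = hom_pack g'.
Proof. by move=> H; invert_existT H; subst. Qed.

Lemma hom_pack_dom X X' Y (g : hom C X Y) (g' : hom C X' Y) :
  existT (fun Z => hom C Z Y) X g = existT _ X' g' -> hom_pack g = hom_pack g'.
Proof. by move=> H; invert_existT H; subst. Qed.

Lemma tm_pack_ty X (T T' : Tyc C X) (a : Tmc C X T) (a' : Tmc C X T') :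
  existT (Tmc C X) T a = existT _ T' a' -> tm_pack a = tm_pack a'.
Proof. by move=> H; rewrite /tm_pack H. Qed.

Lemma tm_pack_eq_rect X (T T' : Tyc C X) (e : T = T') (a : Tmc C X T) :
  existT (Tmc C X) T' (eq_rect T (Tmc C X) a T' e) = existT _ T a.
Proof. by destruct e. Qed.

Lemma hom_pack_bang X Y (f : hom C X Y) : Y = top C -> hom_pack f = hom_pack (bang C X).
Proof. by move=> eY; subst Y; rewrite (bang_uniq C X f). Qed.

Lemma ext_congr X X' (A : Tyc C X) (A' : Tyc C X') :
  existT (Tyc C) X A = existT _ X' A' -> ext C X A = ext C X' A'.
Proof. by move=> H; invert_existT H; subst. Qed.

Lemma tsub_congr X X' Y Y' (A : Tyc C Y) (A' : Tyc C Y') (f : hom C X Y) (f' : hom C X' Y') :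
  existT (Tyc C) Y A = existT _ Y' A' -> hom_pack f = hom_pack f' ->
  existT (Tyc C) X (tsub C _ _ A f) = existT _ X' (tsub C _ _ A' f').
Proof. by move=> H1 H2; invert_existT H2; invert_existT H2; subst; invert_existT H1; subst. Qed.

Lemma msub_congr X X' Y Y' (A : Tyc C Y) (A' : Tyc C Y') (a : Tmc C Y A) (a' : Tmc C Y' A')
    (f : hom C X Y) (f' : hom C X' Y') :
  tm_pack a = tm_pack a' -> hom_pack f = hom_pack f' ->
  tm_pack (msub C _ _ _ a f) = tm_pack (msub C _ _ _ a' f').
Proof.
move=> H1 H2; invert_existT H2; invert_existT H2; subst.
by invert_existT H1; invert_existT H1; subst.
Qed.

Lemma vr_congr X X' (A : Tyc C X) (A' : Tyc C X') :
  existT (Tyc C) X A = existT _ X' A' -> tm_pack (vr C X A) = tm_pack (vr C X' A').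
Proof. by move=> H; invert_existT H; subst. Qed.

Lemma pr_congr X X' (A : Tyc C X) (A' : Tyc C X') :
  existT (Tyc C) X A = existT _ X' A' -> hom_pack (pr C X A) = hom_pack (pr C X' A').
Proof. by move=> H; invert_existT H; subst. Qed.

Lemma pair_congr X X' Y Y' (A : Tyc C Y) (A' : Tyc C Y') (f : hom C X Y) (f' : hom C X' Y')
    (c : Tmc C X (tsub C _ _ A f)) (c' : Tmc C X' (tsub C _ _ A' f')) :
  hom_pack f = hom_pack f' -> existT (Tyc C) Y A = existT _ Y' A' -> tm_pack c = tm_pack c' ->
  hom_pack (pair C _ _ A f c) = hom_pack (pair C _ _ A' f' c').
Proof.
move=> H1 H2 H3; invert_existT H1; invert_existT H1; subst; invert_existT H2; subst.
by invert_existT H3; invert_existT H3; subst.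
Qed.

End CwfCongruence.

Lemma cmapP_mono (P P' : judg -> Prop) ts D G :
  (forall j, P j -> P' j) -> cmapP P ts D G -> cmapP P' ts D G.
Proof. by move=> H [h1 h2 h3 h4]; split => // [|| k hk]; apply: H; [| | exact: h4]. Qed.

Section Derivations.
Variable Sg : decl -> Prop.

Lemma J_closed : Defs.closed Sg (J Sg).
Proof.
split.
- exact: J_empty.
- move=> G A; exact: J_ext.
- by move=> G i hG hi P HP; case: (HP) => _ _ H _ _; apply: H (hG P HP) hi.
- move=> G S ts D hS hc P HP; case: (HP) => _ _ _ H _; apply: H hS _.
  by apply: cmapP_mono hc => j hj; apply: hj P HP.
- move=> G f U ts D hS hc hU P HP; case: (HP) => _ _ _ _ H; apply: H hS _ (hU P HP).
  by apply: cmapP_mono hc => j hj; apply: hj P HP.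
Qed.

Lemma J_induct (W : judg -> Prop) :
  Defs.closed Sg (fun j => J Sg j /\ W j) -> forall j, J Sg j -> W j.
Proof. by move=> HC j hj; case: (hj _ HC). Qed.

Definition wf_prefixes G := forall k, k < size G ->
  [/\ J Sg (JCtx (take k G)), J Sg (JTy (nth dflt_decl G k).2 (take k G))
    & (nth dflt_decl G k).1 = fresh (take k G)].

Lemma ctx_inv G : J Sg (JCtx G) -> wf_prefixes G.
Proof.
move=> hG; pose W j := if j is JCtx G then wf_prefixes G else True.
apply: (@J_induct W _ _ hG); case: J_closed => c1 c2 c3 c4 c5; split.
- by split.
- move=> G0 A [hG0 WG] [hA _]; split; first exact: c2.
  move=> k /=; rewrite size_rcons ltnS leq_eqVlt => /orP [/eqP ->|hk].
    by rewrite take_rcons_le // take_size nth_rcons ltnn eqxx.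
  by rewrite take_rcons_le ?(ltnW hk) // nth_rcons hk; apply: WG.
- by move=> G0 i [hG0 _] hi; split => //; apply: c3.
- by move=> G0 S ts D hS hc; split => //; apply: c4 hS (cmapP_mono _ hc) => j [].
- by move=> G0 f U ts D hS hc [hU _]; split => //; apply: c5 hS (cmapP_mono _ hc) hU => j [].
Qed.

Lemma ctx_fresh G : J Sg (JCtx G) -> fresh_ctx G.
Proof. by move=> hG k hk; case: (ctx_inv hG hk). Qed.

Definition ctx_prefix (G G' : ctx) :=
  size G <= size G' /\ forall k, k < size G -> nth dflt_decl G' k = nth dflt_decl G k.

Lemma ctx_prefix_refl G : ctx_prefix G G.
Proof. by []. Qed.

Lemma ctx_prefix_take G k : k <= size G -> ctx_prefix (take k G) G.
Proof. by move=> hk; split=> [|j]; rewrite size_takel // => hj; rewrite nth_take. Qed.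

Lemma ctx_prefix_rcons G d : ctx_prefix G (rcons G d).
Proof. by split=> [|k hk]; rewrite ?size_rcons ?nth_rcons ?hk. Qed.

Lemma weaken_judg j : J Sg j -> match j with
  | JCtx _ => True
  | JTy A G => forall G', J Sg (JCtx G') -> ctx_prefix G G' -> J Sg (JTy A G')
  | JTm a A G => forall G', J Sg (JCtx G') -> ctx_prefix G G' -> J Sg (JTm a A G')
  end.
Proof.
move: j; apply: J_induct; case: J_closed => c1 c2 c3 c4 c5; split.
- by split.
- by move=> G A [hG _] [hA _]; split => //; apply: c2.
- move=> G i [hG _] hi; split; first exact: c3.
  by move=> G' hG' [hs hn]; rewrite -(hn i hi); apply: c3 (leq_trans hi hs).
- move=> G S ts D hS hc; split; first by apply: c4 hS (cmapP_mono _ hc) => j0 [].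
  move=> G' hG' hx; apply: c4 hS _; case: hc => [_ [hG0 _] hs hk]; split => // k hk0.
  by case: (hk k hk0) => _; apply.
- move=> G f U ts D hS hc [hU WU]; split; first by apply: c5 hS (cmapP_mono _ hc) hU => j0 [].
  move=> G' hG' hx; apply: c5 hS _ (WU G' hG' hx); case: hc => [_ [hG0 _] hs hk].
  by split => // k hk0; case: (hk k hk0) => _; apply.
Qed.

Lemma weaken_ty A G G' : J Sg (JTy A G) -> J Sg (JCtx G') -> ctx_prefix G G' -> J Sg (JTy A G').
Proof. by move=> hA; apply: (weaken_judg hA). Qed.

Lemma ctx_ty G k : J Sg (JCtx G) -> k < size G -> J Sg (JTy (nth dflt_decl G k).2 G).
Proof.
move=> hG hk; case: (ctx_inv hG hk) => _ hA _.
exact: weaken_ty hA hG (ctx_prefix_take (ltnW hk)).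
Qed.

Lemma tm_ty a A G : J Sg (JTm a A G) -> J Sg (JTy A G).
Proof.
move=> hj; pose W j := if j is JTm a A G then J Sg (JTy A G) else True.
apply: (@J_induct W _ _ hj); case: J_closed => c1 c2 c3 c4 c5; split.
- by split.
- by move=> G0 A0 [hG _] [hA _]; split => //; apply: c2.
- by move=> G0 i [hG _] hi; split; [apply: c3 | apply: ctx_ty].
- by move=> G0 S ts D hS hc; split => //; apply: c4 hS (cmapP_mono _ hc) => j0 [].
- by move=> G0 f U ts D hS hc [hU _]; split => //; apply: c5 hS (cmapP_mono _ hc) hU => j0 [].
Qed.

Lemma J_var G i : J Sg (JCtx G) -> i < size G ->
  J Sg (JTm (Var (nth dflt_decl G i).1) (nth dflt_decl G i).2 G).
Proof. by case: J_closed => _ _ c3 _ _; apply: c3. Qed.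

Lemma cmap_OVt G G' : J Sg (JCtx G) -> J Sg (JCtx G') -> ctx_prefix G G' -> cmap Sg (OVt G) G' G.
Proof.
move=> hG hG' [hs hn]; split => //; first by rewrite !size_map.
move=> k hk; rewrite /OVt (nth_map 0) ?size_map // -map_take subst_ty_id.
by rewrite /OV (nth_map dflt_decl) // -(hn k hk); apply: J_var (leq_trans hk hs).
Qed.

Lemma FOb_eq (X Y : FOb Sg) : proj1_sig X = proj1_sig Y -> X = Y.
Proof. by case: X Y => x hx [y hy] /= e; subst; rewrite (proof_irrelevance _ hx hy). Qed.

End Derivations.

Section Agreement.
Variables (Sg : decl -> Prop) (C : cwf) (M M' : Fmor Sg C).

Definition agree_ob (X : FOb Sg) := Fo M X = Fo M' X.
Definition agree_ty (G : FOb Sg) (A : FTy G) :=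
  existT (Tyc C) (Fo M G) (sg M A) = existT (Tyc C) (Fo M' G) (sg M' A).
Definition agree_tm (G : FOb Sg) (A : FTy G) (a : FTm A) := tm_pack (th M a) = tm_pack (th M' a).
Definition agree_hom (D G : FOb Sg) (f : FHom D G) := hom_pack (Fh M f) = hom_pack (Fh M' f).

Lemma Fmor_ext :
  (forall X, agree_ob X) -> (forall D G (f : FHom D G), agree_hom f) ->
  (forall G (A : FTy G), agree_ty A) -> (forall G (A : FTy G) (a : FTm A), agree_tm a) ->
  M = M'.
Proof.
rewrite /agree_ob /agree_hom /agree_ty /agree_tm /hom_pack /tm_pack.
case: M M' => Fo1 Fh1 sg1 th1 ? ? ? ? ? ? ? ? ? [Fo2 Fh2 sg2 th2 ? ? ? ? ? ? ? ? ?] /=.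
move=> hO hH hT hM.
have eFo := functional_extensionality_dep _ _ hO; subst Fo2.
have esg : sg1 = sg2.
  apply: functional_extensionality_dep => G; apply: functional_extensionality_dep => A.
  exact: inj_pair2 (hT G A).
subst sg2.
have eFh : Fh1 = Fh2.
  apply: functional_extensionality_dep => D; apply: functional_extensionality_dep => G.
  apply: functional_extensionality_dep => f.
  by have H := hH D G f; apply inj_pair2 in H; apply: inj_pair2 H.
subst Fh2.
have eth : th1 = th2.
  apply: functional_extensionality_dep => G; apply: functional_extensionality_dep => A.
  apply: functional_extensionality_dep => a.
  by have H := hM G A a; apply inj_pair2 in H; apply: inj_pair2 H.
subst th2; f_equal; apply: proof_irrelevance.
Qed.

Lemma agree_ob_ext (G : FOb Sg) (A : FTy G) : agree_ty A -> agree_ob (FExt A).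
Proof. by move=> hA; rewrite /agree_ob (Fo_ext M A) (Fo_ext M' A); apply: ext_congr. Qed.

Lemma agree_ty_subst (D G : FOb Sg) (f : FHom D G) (A : FTy G) (B : FTy D) :
  proj1_sig B = subst_ty (sb (proj1_sig f) (proj1_sig G)) (proj1_sig A) ->
  agree_hom f -> agree_ty A -> agree_ty B.
Proof.
move=> eB hf hA; rewrite /agree_ty (sg_sub M eB) (sg_sub M' eB).
exact: tsub_congr hA hf.
Qed.

Lemma agree_tm_subst (D G : FOb Sg) (f : FHom D G) (A : FTy G) (a : FTm A)
    (B : FTy D) (b : FTm B) :
  proj1_sig B = subst_ty (sb (proj1_sig f) (proj1_sig G)) (proj1_sig A) ->
  proj1_sig b = subst_tm (sb (proj1_sig f) (proj1_sig G)) (proj1_sig a) ->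
  agree_hom f -> agree_tm a -> agree_tm b.
Proof.
move=> eB eb hf ha; rewrite /agree_tm (tm_pack_ty (th_sub M eB eb)) (tm_pack_ty (th_sub M' eB eb)).
exact: msub_congr ha hf.
Qed.

Lemma agree_hom_top (Y X : FOb Sg) (f : FHom Y X) :
  proj1_sig X = [::] -> agree_ob Y -> agree_hom f.
Proof.
move=> eX hY; have eXtop : X = Ftop Sg by apply: FOb_eq.
subst X; rewrite /agree_hom (hom_pack_bang _ (Fo_top M)) (hom_pack_bang _ (Fo_top M')).
by rewrite hY.
Qed.

Lemma agree_hom_pr (G : FOb Sg) (A : FTy G) (p : FHom (FExt A) G) :
  proj1_sig p = OVt (proj1_sig G) -> agree_ty A -> agree_hom p.
Proof.
move=> ep hA; rewrite /agree_hom (hom_pack_dom (Fh_pr M ep)) (hom_pack_dom (Fh_pr M' ep)).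
exact: pr_congr.
Qed.

Lemma agree_hom_pair (D G : FOb Sg) (A : FTy G) (f : FHom D G) (B : FTy D) (a : FTm B)
    (h : FHom D (FExt A)) :
  proj1_sig B = subst_ty (sb (proj1_sig f) (proj1_sig G)) (proj1_sig A) ->
  proj1_sig h = rcons (proj1_sig f) (proj1_sig a) ->
  agree_hom f -> agree_ty A -> agree_tm a -> agree_hom h.
Proof.
move=> eB eh hf hA ha.
pose c := eq_rect _ (Tmc C (Fo M D)) (th M a) _ (sg_sub M eB).
pose c' := eq_rect _ (Tmc C (Fo M' D)) (th M' a) _ (sg_sub M' eB).
have E := Fh_pair (c := c) eB eh (tm_pack_eq_rect _ _).
have E' := Fh_pair (c := c') eB eh (tm_pack_eq_rect _ _).
rewrite /agree_hom (hom_pack_cod E) (hom_pack_cod E'); apply: pair_congr => //.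
by rewrite (tm_pack_ty (tm_pack_eq_rect _ _)) (tm_pack_ty (tm_pack_eq_rect _ _)).
Qed.

Lemma agree_tm_vr (G : FOb Sg) (A : FTy G) (T : FTy (FExt A)) (m : FTm T) :
  proj1_sig T = proj1_sig A -> proj1_sig m = Var (fresh (proj1_sig G)) ->
  agree_ty A -> agree_tm m.
Proof.
move=> eT em hA.
have eB : proj1_sig T = subst_ty (sb (OVt (proj1_sig G)) (proj1_sig G)) (proj1_sig A).
  by rewrite eT /sb subst_ty_id.
by rewrite /agree_tm /tm_pack (th_vr M eB em) (th_vr M' eB em); apply: vr_congr.
Qed.

Lemma agree_tm_weaken (G : FOb Sg) (A : FTy G) (B : FTy G) (b : FTm B)
    (T : FTy (FExt A)) (m : FTm T) :
  proj1_sig T = proj1_sig B -> proj1_sig m = proj1_sig b ->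
  agree_ty A -> agree_tm b -> agree_tm m.
Proof.
move=> eT em hA hb.
pose p : FHom (FExt A) G :=
  exist _ (OVt (proj1_sig G)) (cmap_OVt (proj2_sig G) (proj2_sig (FExt A)) (ctx_prefix_rcons _ _)).
apply: (agree_tm_subst (f := p) (a := b) _ _ (agree_hom_pr (p := p) erefl hA) hb).
- by rewrite eT /sb subst_ty_id.
- by rewrite em /sb subst_tm_id // => x; apply: subst_var_id.
Qed.

(* Judgements are raw syntax, so the induction hypothesis speaks of the elements of
   F_Sigma carrying that syntax (there is at most one, by FOb_eq).  Agreement on a
   context includes all its prefixes, through which context maps into it are built
   by iterated pairing. *)
Definition agree_ty_at (A : pty) (G : ctx) := forall (X : FOb Sg) (T : FTy X),
  proj1_sig X = G -> proj1_sig T = A -> agree_ty T.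
Definition agree_tm_at (a : tm) (A : pty) (G : ctx) := forall (X : FOb Sg) (T : FTy X) (m : FTm T),
  proj1_sig X = G -> proj1_sig T = A -> proj1_sig m = a -> agree_tm m.
Definition agree_ctx_at (G : ctx) :=
  [/\ forall k, k <= size G -> forall X : FOb Sg, proj1_sig X = take k G -> agree_ob X,
      forall k, k < size G -> agree_ty_at (nth dflt_decl G k).2 (take k G) &
      forall k, k < size G -> agree_tm_at (Var (nth dflt_decl G k).1) (nth dflt_decl G k).2 G].
Definition agree_on (j : judg) :=
  match j with
  | JCtx G => agree_ctx_at G
  | JTy A G => agree_ty_at A G
  | JTm a A G => agree_tm_at a A G
  end.
Definition J_agree (j : judg) := J Sg j /\ agree_on j.

Lemma agree_cmap_prefix ts D G : cmapP J_agree ts D G -> forall k, k <= size G ->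
  forall (Y X : FOb Sg) (f : FHom Y X),
  proj1_sig Y = D -> proj1_sig X = take k G -> proj1_sig f = take k ts -> agree_hom f.
Proof.
case=> [[hD [agD _ _]] [hG [_ agG _]] hsz hts].
elim=> [|k IH] hk Y X f eY eX ef.
  apply: agree_hom_top; first by rewrite eX take0.
  by apply: (agD (size D) (leqnn _)); rewrite take_size.
case: (ctx_inv hG hk) => hGk hAk hfr.
pose Xk : FOb Sg := exist _ (take k G) hGk.
pose Ak : FTy Xk := exist _ (nth dflt_decl G k).2 hAk.
have eXk : X = FExt Ak.
  apply: FOb_eq; rewrite eX /= (take_nth dflt_decl hk) -hfr.
  by case: (nth dflt_decl G k).
subst X.
have eOV : OV (take k G) = take k (OV G) by rewrite /OV map_take.
have hf0 : cmap Sg (take k ts) (proj1_sig Y) (take k G).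
  split; rewrite ?eY ?size_takel ?hsz ?(ltnW hk) // => j hj.
  rewrite nth_take // nth_take // eOV !take_takel ?(ltnW hj) //.
  exact: (hts j (ltn_trans hj hk)).1.
pose f0 : FHom Y Xk := exist _ (take k ts) hf0.
case: (hts k hk) => hak agak.
set Bk := subst_ty _ _ in hak agak.
have hB : J Sg (JTy Bk (proj1_sig Y)) by rewrite eY; apply: tm_ty hak.
pose B : FTy Y := exist (fun A => J Sg (JTy A (proj1_sig Y))) _ hB.
have ha : J Sg (JTm (nth (Var 0) ts k) Bk (proj1_sig Y)) by rewrite eY.
pose a : FTm B := exist (fun t => J Sg (JTm t (proj1_sig B) (proj1_sig Y))) _ ha.
apply: (@agree_hom_pair _ _ _ f0 B a).
- by rewrite /= /sb eOV.
- by rewrite ef /= (take_nth (Var 0)) // hsz.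
- exact: IH (ltnW hk) Y Xk f0 eY erefl erefl.
- exact: agG k hk Xk Ak erefl erefl.
- exact: agak Y B a eY erefl erefl.
Qed.

Lemma agree_cmap ts D G (Y X : FOb Sg) (f : FHom Y X) : cmapP J_agree ts D G ->
  proj1_sig Y = D -> proj1_sig X = G -> proj1_sig f = ts -> agree_hom f.
Proof.
move=> hc eY eX ef; case: (hc) => _ _ hsz _.
by apply: (agree_cmap_prefix hc (leqnn _)); rewrite ?take_size // -hsz take_size.
Qed.

Lemma agree_ctx_empty : agree_ctx_at [::].
Proof.
split=> // k; rewrite leqn0 => /eqP -> X eX.
have -> : X = Ftop Sg by apply: FOb_eq.
by rewrite /agree_ob (Fo_top M) (Fo_top M').
Qed.

Lemma agree_ctx_ext G A : J Sg (JCtx G) -> agree_ctx_at G -> J Sg (JTy A G) -> agree_ty_at A G ->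
  agree_ctx_at (rcons G (fresh G, A)).
Proof.
move=> hG [ag1 ag2 ag3] hA agA.
pose G0 : FOb Sg := exist _ G hG.
pose A0 : FTy G0 := exist (fun A => J Sg (JTy A (proj1_sig G0))) A hA.
have hA0 : agree_ty A0 := agA G0 A0 erefl erefl.
have eExt X : proj1_sig X = rcons G (fresh G, A) -> X = FExt A0 by move=> eX; apply: FOb_eq.
split.
- move=> k; rewrite size_rcons leq_eqVlt => /orP [/eqP ->|hk] X eX.
    rewrite take_oversize ?size_rcons // in eX.
    by rewrite (eExt X eX); apply: agree_ob_ext.
  by rewrite take_rcons_le // in eX; apply: ag1 k hk X eX.
- move=> k; rewrite size_rcons ltnS leq_eqVlt => /orP [/eqP ->|hk].
    by rewrite nth_rcons ltnn eqxx take_rcons_le // take_size.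
  by rewrite nth_rcons hk take_rcons_le ?(ltnW hk) //; apply: ag2.
- move=> k; rewrite size_rcons ltnS leq_eqVlt => /orP [/eqP ->|hk] X T m eX eT em;
    have eX0 := eExt X eX; subst X.
    rewrite nth_rcons ltnn eqxx /= in eT em.
    exact: (@agree_tm_vr G0 A0 T m).
  rewrite nth_rcons hk in eT em.
  pose Ak : FTy G0 := exist (fun A => J Sg (JTy A (proj1_sig G0))) _ (ctx_ty hG hk).
  pose a : FTm Ak := exist (fun t => J Sg (JTm t (proj1_sig Ak) G)) _ (J_var hG hk).
  exact: (agree_tm_weaken (b := a) eT em hA0 (ag3 k hk G0 Ak a erefl erefl erefl)).
Qed.

Hypothesis Hsig : signature Sg.
Hypothesis HT : forall (G : FOb Sg) (S : nat) (A : FTy G),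
  Sg (DTy (proj1_sig G) S) -> proj1_sig A = PTy S (OVt (proj1_sig G)) -> agree_ty A.
Hypothesis HF : forall (G : FOb Sg) (f : nat) (U : pty) (A : FTy G) (a : FTm A),
  Sg (DFn (proj1_sig G) f U) -> proj1_sig A = U -> proj1_sig a = App f (OVt (proj1_sig G)) ->
  agree_ty A /\ agree_tm a.

Lemma agree_ty_app G S ts D : Sg (DTy G S) -> cmapP J_agree ts D G -> agree_ty_at (PTy S ts) D.
Proof.
move=> hS hc X T eX eT; case: (hc) => _ [hG _] hsz _.
pose G0 : FOb Sg := exist _ G hG.
have hA : J Sg (JTy (PTy S (OVt G)) G).
  by case: (J_closed Sg) => _ _ _ c4 _; apply: c4 hS (cmap_OVt hG hG (ctx_prefix_refl G)).
pose A : FTy G0 := exist (fun A => J Sg (JTy A G)) _ hA.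
have hf : cmap Sg ts (proj1_sig X) G by rewrite eX; apply: cmapP_mono hc => j [].
pose f : FHom X G0 := exist _ ts hf.
apply: (agree_ty_subst (f := f) (A := A)).
- by rewrite eT /subst_ty /= (subst_OVt (ctx_fresh hG) hsz).
- exact: (agree_cmap (f := f) hc eX erefl erefl).
- exact: HT G0 S A hS erefl.
Qed.

Lemma agree_fn_app G f U ts D : Sg (DFn G f U) -> cmapP J_agree ts D G ->
  agree_tm_at (App f ts) (subst_ty (sb ts G) U) D.
Proof.
move=> hF hc X T m eX eT em; case: (hc) => _ [hG _] hsz _.
pose G0 : FOb Sg := exist _ G hG.
have hU : J Sg (JTy U G) by case: Hsig => _ _ sgU; apply: sgU hF.
pose A : FTy G0 := exist (fun A => J Sg (JTy A G)) _ hU.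
have ha : J Sg (JTm (App f (OVt G)) U G).
  case: (J_closed Sg) => _ _ _ _ c5; have := c5 G f U (OVt G) G hF (cmap_OVt hG hG (ctx_prefix_refl G)).
  by rewrite /sb subst_ty_id; apply.
pose a : FTm A := exist (fun t => J Sg (JTm t U G)) _ ha.
have hf : cmap Sg ts (proj1_sig X) G by rewrite eX; apply: cmapP_mono hc => j [].
pose fh : FHom X G0 := exist _ ts hf.
apply: (agree_tm_subst (f := fh) (a := a)).
- exact: eT.
- by rewrite em /= (subst_OVt (ctx_fresh hG) hsz).
- exact: (agree_cmap (f := fh) hc eX erefl erefl).
- exact: (@HF G0 f U A a hF erefl erefl).2.
Qed.

Lemma J_agree_closed : Defs.closed Sg J_agree.
Proof.
case: (J_closed Sg) => c1 c2 c3 c4 c5; split.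
- by split; [exact: c1 | exact: agree_ctx_empty].
- by move=> G A [hG agG] [hA agA]; split; [exact: c2 | exact: agree_ctx_ext].
- by move=> G i [hG [_ _ ag3]] hi; split; [exact: c3 | exact: ag3].
- move=> G S ts D hS hc; split; last exact: agree_ty_app hS hc.
  by apply: c4 hS (cmapP_mono _ hc) => j [].
- move=> G f U ts D hF hc [hU _]; split; last exact: agree_fn_app hF hc.
  by apply: c5 hF (cmapP_mono _ hc) hU => j [].
Qed.

Lemma agree_derivable j : J Sg j -> J_agree j.
Proof. by move=> hj; apply: hj J_agree_closed. Qed.

End Agreement.

Theorem mainTheorem13 (Sg : decl -> Prop) (C : cwf) (M M' : Fmor Sg C) :
  signature Sg ->
  (forall G : FOb Sg,
      (exists S, Sg (DTy (proj1_sig G) S)) \/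
      (exists f U, Sg (DFn (proj1_sig G) f U)) ->
      Fo M G = Fo M' G) ->
  (forall (G : FOb Sg) (S : nat) (A : FTy G),
      Sg (DTy (proj1_sig G) S) ->
      proj1_sig A = PTy S (OVt (proj1_sig G)) ->
      existT (Tyc C) (Fo M G) (sg M A) = existT (Tyc C) (Fo M' G) (sg M' A)) ->
  (forall (G : FOb Sg) (f : nat) (U : pty) (A : FTy G) (a : FTm A),
      Sg (DFn (proj1_sig G) f U) ->
      proj1_sig A = U ->
      proj1_sig a = App f (OVt (proj1_sig G)) ->
      existT (Tyc C) (Fo M G) (sg M A) = existT (Tyc C) (Fo M' G) (sg M' A) /\
      existT (fun X => {T : Tyc C X & Tmc C X T}) (Fo M G) (existT _ (sg M A) (th M a))
      = existT (fun X => {T : Tyc C X & Tmc C X T}) (Fo M' G) (existT _ (sg M' A) (th M' a))) ->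
  M = M'.
Proof.
move=> Hsig _ HT HF; have agree_all := agree_derivable Hsig HT HF.
apply: Fmor_ext => [[G hG] | D G f | G A | G A a].
- case: (agree_all _ hG) => _ [agG _ _].
  by apply: (agG (size G) (leqnn _)); rewrite take_size.
- exact: (agree_cmap (f := f) (cmapP_mono agree_all (proj2_sig f)) erefl erefl erefl).
- exact: (agree_all _ (proj2_sig A)).2 G A erefl erefl.
- exact: (agree_all _ (proj2_sig a)).2 G A a erefl erefl erefl.
Qed.
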